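(* Let $a\in[0,\infty)$ and let $t:[0,1]\to[0,\infty]$ and $s:[0,\infty]\to[0,1]$ be continuous and increasing functions such that $G_{t,s}(x,y)=s(t(x)+t(y))$ defines a grouping function $G_{t,s}:[0,1]^2\to[0,1]$, and suppose that at least one of the following holds: (1) $t(x)=\frac{a}{2}$ if and only if $x=0$; (2) $s(x)=0$ if and only if $x\in[0,a]$. Then there exist a pseudo automorphism $\mathcal{F}$ and a t-superconorm $T_{super}$ such that $G_{t,s}(x,y)=\mathcal{F}(T_{super}(x,y))$ for all $x,y\in[0,1]$.
   Context: ''Increasing'' means non-decreasing. Arithmetic in $[0,\infty]$ uses $c+\infty=\infty$; continuity on $[0,\infty]$ refers to the usual topology of the extended half-line. A grouping function is a map $G:[0,1]^2\to[0,1]$ that is (G1) commutative, (G2) $G(x,y)=0$ iff $x=y=0$, (G3) $G(x,y)=1$ iff $x=1$ or $y=1$, (G4) increasing in each variable, (G5) continuous. A pseudo automorphism is a continuous increasing map $\mathcal{F}:[0,1]\to[0,1]$ with $\mathcal{F}(x)=1$ iff $x=1$ and $\mathcal{F}(x)=0$ iff $x=0$. A t-superconorm is a commutative, associative map $S:[0,1]^2\to[0,1]$, increasing in each variable, with $S(x,y)\ge\max\{x,y\}$ for all $x,y$. *)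

From HB Require Import structures.
From mathcomp Require Import all_boot all_order all_algebra.
From mathcomp Require Import all_classical all_reals all_analysis.
Set Implicit Arguments. Unset Strict Implicit. Unset Printing Implicit Defensive.
Import Order.TTheory GRing.Theory Num.Theory.
Import numFieldNormedType.Exports.
Local Open Scope classical_set_scope.
Local Open Scope ring_scope.

Section Defs.
Variable R : realType.

Definition I01 : set R := `[0, 1]%classic.

Definition Ext0 : set (\bar R) := [set x | (0 <= x)%E].

(* grouping function on [0,1]^2 (values outside [0,1]^2 irrelevant) *)
Definition grouping (G : R -> R -> R) : Prop :=
  (forall x y, I01 x -> I01 y -> I01 (G x y)) /\
  [/\ (forall x y, I01 x -> I01 y -> G x y = G y x),
      (forall x y, I01 x -> I01 y -> (G x y = 0 <-> (x = 0 /\ y = 0))),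
      (forall x y, I01 x -> I01 y -> (G x y = 1 <-> (x = 1 \/ y = 1))),
      (forall x1 x2 y, I01 x1 -> I01 x2 -> I01 y -> x1 <= x2 ->
          G x1 y <= G x2 y /\ G y x1 <= G y x2) &
      {within I01 `*` I01, continuous (fun p : R * R => G p.1 p.2)}].

Definition pseudo_automorphism (F : R -> R) : Prop :=
  [/\ (forall x, I01 x -> I01 (F x)),
      {within I01, continuous F},
      (forall x y, I01 x -> I01 y -> x <= y -> F x <= F y),
      (forall x, I01 x -> (F x = 1 <-> x = 1)) &
      (forall x, I01 x -> (F x = 0 <-> x = 0))].

Definition t_superconorm (S : R -> R -> R) : Prop :=
  [/\ (forall x y, I01 x -> I01 y -> I01 (S x y)),
      (forall x y, I01 x -> I01 y -> S x y = S y x),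
      (forall x y z, I01 x -> I01 y -> I01 z -> S x (S y z) = S (S x y) z),
      (forall x1 x2 y, I01 x1 -> I01 x2 -> I01 y -> x1 <= x2 ->
          S x1 y <= S x2 y /\ S y x1 <= S y x2) &
      (forall x y, I01 x -> I01 y -> Num.max x y <= S x y)].

End Defs.
Arguments I01 {R}.
Arguments Ext0 {R}.

From HB Require Import structures.
From mathcomp Require Import all_boot all_order all_algebra.
From mathcomp Require Import all_classical all_reals all_analysis.
From mathcomp Require Import lra.
Import Order.TTheory GRing.Theory Num.Theory.
Import numFieldNormedType.Exports.
Local Open Scope classical_set_scope.
Local Open Scope ring_scope.

(* As G(0,0) = 0 <> 1 = G(1,1), t(0) is finite.  On [t(0), t(1)] the truncated
   sum p (+) q = min(p + q - t(0), t(1)) is commutative, monotone and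
   associative, and t(x) <= t(x) (+) t(y).  The upper pseudo-inverse
   t^-1(v) = sup {z in [0,1] | t(z) <= v} is a right inverse of t on
   [t(0), t(1)] by the intermediate value theorem, so
   T(x,y) = t^-1(t(x) (+) t(y)) is a t-superconorm.  For F(z) = G(z,0),
   F(T(x,y)) = s(min(t(x) + t(y), t(1) + t(0))), which is G(x,y) because s
   already reaches 1 at t(1) + t(0). *)

Lemma I01P (R : realType) (z : R) : I01 z <-> 0 <= z <= 1.
Proof. by rewrite /I01 /= in_itv. Qed.

Lemma I01_0 {R : realType} : I01 (0 : R).
Proof. by apply/I01P; rewrite lexx ler01. Qed.

Lemma I01_1 {R : realType} : I01 (1 : R).
Proof. by apply/I01P; rewrite lexx ler01. Qed.

Section PseudoInverse.
Set Implicit Arguments.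
Unset Strict Implicit.
Variables (R : realType) (f : R -> R).
Hypothesis f_cont : {within I01, continuous f}.
Hypothesis f_mono : forall x y, I01 x -> I01 y -> x <= y -> f x <= f y.

Definition pinv (m : R) : R := sup [set z | I01 z /\ f z <= m].

Lemma le_pinv m z : I01 z -> f z <= m -> z <= pinv m.
Proof.
move=> z01 fzm; apply: ub_le_sup; last by split.
by exists 1 => y [/I01P/andP[]].
Qed.

Lemma pinv_in01 m : f 0 <= m -> I01 (pinv m).
Proof.
move=> f0m; apply/I01P; rewrite le_pinv //=; last exact: I01_0.
by apply: ge_sup; [exists 0; split=> //; exact: I01_0 | move=> y [/I01P/andP[]]].
Qed.

Lemma pinv_homo m m' : f 0 <= m -> m <= m' -> pinv m <= pinv m'.
Proof.
move=> f0m mm'; apply: ge_sup; first by exists 0; split=> //; exact: I01_0.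
by move=> z [z01 fzm]; apply: le_pinv z01 (le_trans fzm mm').
Qed.

Lemma IVT_I01 a b m : 0 <= a <= b -> b <= 1 -> f a <= m <= f b ->
  exists2 c, a <= c <= b & f c = m.
Proof.
move=> /andP[a0 ab] b1 /andP[fam mfb].
have f_cont_ab : {within `[a, b], continuous f}.
  apply: continuous_subspaceW f_cont => z /=; rewrite in_itv /= => /andP[az zb].
  by apply/I01P; rewrite (le_trans a0 az) (le_trans zb b1).
have [|c] := @IVT R f a b m ab f_cont_ab; first by rewrite ge_min fam le_max mfb orbT.
by rewrite in_itv; exists c.
Qed.

Lemma f_pinv_le m : f 0 <= m -> f (pinv m) <= m.
Proof.
move=> f0m; have /I01P/andP[c0 c1] := pinv_in01 f0m.
(* Otherwise the IVT gives y < pinv m with m < f y, yet y lies below some z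
   with f z <= m. *)
rewrite leNgt; apply/negP => mfc.
have [||y /andP[y0 yc] fy] := @IVT_I01 0 (pinv m) ((m + f (pinv m)) / 2) _ c1.
- by rewrite lexx c0.
- by apply/andP; split; lra.
have y_lt : y < pinv m.
  rewrite lt_neqAle yc andbT; apply: contraTneq mfc => yE.
  by rewrite -leNgt; move: fy; rewrite yE; lra.
have [|z [z01 fzm] yz] := sup_gt _ y_lt.
  by exists 0; split; [exact: I01_0 | exact: f0m].
have y01 : I01 y by apply/I01P; rewrite y0 (le_trans yc c1).
have : f y <= f z by exact: f_mono (ltW yz).
lra.
Qed.

Lemma pinvK m : f 0 <= m <= f 1 -> f (pinv m) = m.
Proof.
move=> /andP[f0m mf1]; have /I01P/andP[c0 c1] := pinv_in01 f0m.
have [||d /andP[cd d1] fd] := @IVT_I01 (pinv m) 1 m _ (lexx 1).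
- by rewrite c0 c1.
- by rewrite f_pinv_le.
have dc : d <= pinv m.
  by apply: le_pinv; [apply/I01P; rewrite (le_trans c0 cd) d1 | rewrite fd].
by have -> : pinv m = d by apply/le_anti; rewrite dc cd.
Qed.
End PseudoInverse.

Lemma contract_continuous (R : realType) : continuous (@contract R).
Proof.
move=> x; apply/cvg_ballP => e e0.
exact: filterS (@nbhsx_ballx R (\bar R) x e e0).
Qed.

Section ExtendedPseudoInverse.
Set Implicit Arguments.
Unset Strict Implicit.
Variables (R : realType) (t : R -> \bar R).
Hypothesis t_cont : {within I01, continuous t}.
Hypothesis t_mono : forall x y, I01 x -> I01 y -> x <= y -> (t x <= t y)%E.

(* [contract] embeds [\bar R] monotonically into [[-1, 1]], where the real
   intermediate value theorem is available. *)
Definition tinv (v : \bar R) : R := pinv (fun z => contract (t z)) (contract v).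

Let ct_cont : {within I01, continuous (fun z => contract (t z))}.
Proof. by apply: within_continuous_comp t_cont => v _; exact: contract_continuous. Qed.

Let ct_mono x y : I01 x -> I01 y -> x <= y -> contract (t x) <= contract (t y).
Proof. by move=> x01 y01 xy; rewrite /= le_contract t_mono. Qed.

Lemma le_tinv v z : I01 z -> (t z <= v)%E -> z <= tinv v.
Proof. by move=> z01 tzv; apply: le_pinv z01 _; rewrite /= le_contract. Qed.

Lemma tinv_in01 v : (t 0 <= v)%E -> I01 (tinv v).
Proof. by move=> t0v; apply: pinv_in01; rewrite /= le_contract. Qed.

Lemma tinv_homo v v' : (t 0 <= v)%E -> (v <= v')%E -> tinv v <= tinv v'.
Proof. by move=> t0v vv'; apply: pinv_homo; rewrite /= le_contract. Qed.

Lemma tinvK v : (t 0 <= v <= t 1)%E -> t (tinv v) = v.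
Proof.
case/andP=> t0v vt1; apply: contract_inj; apply: (pinvK ct_cont ct_mono).
by rewrite !le_contract t0v vt1.
Qed.

End ExtendedPseudoInverse.

Section TruncatedSum.
Variables (R : realType) (c0 : R) (c1 : \bar R).
Local Open Scope ereal_scope.

Definition trunc_add (p q : \bar R) : \bar R := mine (p + q - c0%:E) c1.

Lemma trunc_addC : commutative trunc_add.
Proof. by move=> p q; rewrite /trunc_add (addeC p). Qed.

Lemma trunc_add_le p q : trunc_add p q <= c1.
Proof. by rewrite /trunc_add ge_min lexx orbT. Qed.

Lemma le_trunc_add p q : p <= c1 -> c0%:E <= q -> p <= trunc_add p q.
Proof.
move=> pc1 c0q; rewrite /trunc_add le_min pc1 andbT -addeA.
by apply: leeDl; rewrite suber_ge0.
Qed.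

Lemma trunc_add_homo p p' q : p <= p' -> trunc_add p q <= trunc_add p' q.
Proof. by move=> pp'; apply: le_min2 => //; rewrite !leeD2r. Qed.

Lemma trunc_add_minr p q :
  c0%:E <= p -> trunc_add p (mine q c1) = trunc_add p q.
Proof.
move=> c0p; have p_c0 : 0 <= p - c0%:E by rewrite suber_ge0.
rewrite /trunc_add; have [//|c1q] := leP q c1.
rewrite min_r; last by rewrite addeAC; apply: leeDr.
by apply/esym/min_idPr; rewrite addeAC; apply: lee_paddl p_c0 (ltW c1q).
Qed.

Lemma trunc_addA p q r : c0%:E <= p -> c0%:E <= r ->
  trunc_add p (trunc_add q r) = trunc_add (trunc_add p q) r.
Proof.
move=> c0p c0r; rewrite [trunc_add q r]/trunc_add trunc_add_minr //.
rewrite [RHS]trunc_addC [trunc_add p q]/trunc_add trunc_add_minr //.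
rewrite /trunc_add; congr (mine (_ - _) _).
by rewrite !addeA [r + p]addeC (addeAC p r).
Qed.

Lemma trunc_addDr p q : trunc_add p q + c0%:E = mine (p + q) (c1 + c0%:E).
Proof.
by rewrite /trunc_add !minEle leeBlDr //; case: ifP => // _; rewrite subeK.
Qed.

End TruncatedSum.

Section TruncatedAdditiveGenerator.
Set Implicit Arguments.
Unset Strict Implicit.
Variables (R : realType) (t : R -> \bar R).
Hypothesis t_cont : {within I01, continuous t}.
Hypothesis t_mono : forall x y, I01 x -> I01 y -> x <= y -> (t x <= t y)%E.
Hypothesis t0_fin : t 0 \is a fin_num.

Local Notation tadd := (trunc_add (fine (t 0)) (t 1)).

Definition tsuper (x y : R) : R := tinv t (tadd (t x) (t y)).

Let t0E : (fine (t 0))%:E = t 0. Proof. exact: fineK. Qed.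

Let t0_le x : I01 x -> (t 0 <= t x)%E.
Proof. by move=> x01; have /I01P/andP[x0 _] := x01; exact: t_mono _ _ I01_0 x01 x0. Qed.

Let le_t1 x : I01 x -> (t x <= t 1)%E.
Proof. by move=> x01; have /I01P/andP[_ x1] := x01; exact: t_mono _ _ x01 I01_1 x1. Qed.

Let le_tadd x y : I01 x -> I01 y -> (t x <= tadd (t x) (t y))%E.
Proof. by move=> x01 y01; rewrite le_trunc_add ?t0E ?le_t1 ?t0_le. Qed.

Let t0_le_tadd x y : I01 x -> I01 y -> (t 0 <= tadd (t x) (t y))%E.
Proof. by move=> x01 y01; rewrite (le_trans (t0_le x01)) ?le_tadd. Qed.

Lemma t_tsuper x y : I01 x -> I01 y -> t (tsuper x y) = tadd (t x) (t y).
Proof. by move=> x01 y01; apply: tinvK => //; rewrite trunc_add_le t0_le_tadd. Qed.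

Lemma t_tsuperD_t0 x y : I01 x -> I01 y ->
  (t (tsuper x y) + t 0 = mine (t x + t y) (t 1 + t 0))%E.
Proof. by move=> x01 y01; rewrite t_tsuper // -[in LHS]t0E trunc_addDr t0E. Qed.

Lemma tsuper_t_superconorm : t_superconorm tsuper.
Proof.
split.
- by move=> x y x01 y01; apply: tinv_in01; apply: t0_le_tadd.
- by move=> x y _ _; rewrite /tsuper trunc_addC.
- move=> x y z x01 y01 z01; rewrite /tsuper -/(tsuper y z) -/(tsuper x y).
  by rewrite !t_tsuper // trunc_addA ?t0E ?t0_le.
- move=> x1 x2 y x1_01 x2_01 y01 x12; rewrite /tsuper ![tadd (t y) _]trunc_addC.
  by split; apply: tinv_homo; rewrite ?t0_le_tadd // trunc_add_homo ?t_mono.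
- move=> x y x01 y01; rewrite ge_max !le_tinv ?le_tadd //.
  by rewrite trunc_addC le_tadd.
Qed.

End TruncatedAdditiveGenerator.

Lemma within_continuous_section {X Y Z : topologicalType} (A : set X) (B : set Y)
    (g : X -> Y -> Z) y :
  B y -> {within A `*` B, continuous (fun p => g p.1 p.2)} ->
  {within A, continuous (g ^~ y)}.
Proof.
move=> By /subspace_continuousP g_cont; apply/subspace_continuousP => x Ax.
apply: cvg_trans (g_cont (x, y) (conj Ax By)) => P /= gP.
have pair_cvg : (fun z => (z, y)) @ x --> (x, y).
  by apply: cvg_pair; [exact: cvg_id | exact: cvg_cst].
change (nbhs x (fun z => A z -> P (g z y))).
have h : nbhs x (fun z => (A `*` B) (z, y) -> P (g z y)) := pair_cvg _ gP.
by apply: filterS h => z gzP Az; apply: gzP.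
Qed.

Lemma grouping_section0 (R : realType) (G : R -> R -> R) :
  grouping G -> pseudo_automorphism (G ^~ 0).
Proof.
move=> [G01 [_ G0 G1 G_mono G_cont]]; split.
- by move=> x x01; exact: G01 x01 I01_0.
- exact: within_continuous_section I01_0 G_cont.
- by move=> x y x01 y01 xy; case: (G_mono x y 0 x01 y01 I01_0 xy).
- move=> x x01; rewrite G1 //; last exact: I01_0.
  by split=> [[//|/esym/eqP]|]; [rewrite oner_eq0 | left].
- by move=> x x01; rewrite G0 //; [split=> [[]|] | exact: I01_0].
Qed.

Lemma grouping_t0_fin (R : realType) (t : R -> \bar R) (s : \bar R -> R) :
  (forall x, I01 x -> Ext0 (t x)) ->
  (forall x y, I01 x -> I01 y -> x <= y -> (t x <= t y)%E) ->
  grouping (fun x y => s (t x + t y)%E) -> t 0 \is a fin_num.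
Proof.
move=> t_ge0 t_mono [_ [_ G0 G1 _ _]].
have := t_ge0 0 I01_0; rewrite /Ext0 /= fin_numE; case E: (t 0) => [r| |] //= _.
have t1 : t 1 = +oo%E.
  by apply/eqP; rewrite -leye_eq -E t_mono ?ler01 //; [exact: I01_0 | exact: I01_1].
have := G0 0 0 I01_0 I01_0; have := G1 1 1 I01_1 I01_1.
rewrite E t1 => -[_ G11] [_ G00].
by move/eqP: (G00 (conj erefl erefl)); rewrite G11 ?oner_eq0 //; left.
Qed.

Lemma monotone_mine_saturated (R : realType) (s : \bar R -> R) (p c : \bar R) :
  (forall x y, Ext0 x -> Ext0 y -> (x <= y)%E -> s x <= s y) ->
  Ext0 p -> Ext0 c -> s p <= 1 -> s c = 1 -> s (mine p c) = s p.
Proof.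
move=> s_mono p0 c0 sp1 sc1; rewrite minEle; case: leP => // cp.
by rewrite sc1; apply/le_anti; rewrite sp1 -sc1 s_mono // ltW.
Qed.

Theorem proposition6p7 (R : realType) (a : R) (t : R -> \bar R) (s : \bar R -> R) :
  0 <= a ->
  (forall x, I01 x -> Ext0 (t x)) ->
  (forall x, Ext0 x -> I01 (s x)) ->
  {within I01, continuous t} ->
  {within Ext0, continuous s} ->
  (forall x y, I01 x -> I01 y -> x <= y -> (t x <= t y)%E) ->
  (forall x y, Ext0 x -> Ext0 y -> (x <= y)%E -> s x <= s y) ->
  grouping (fun x y => s (t x + t y)%E) ->
  ((forall x, I01 x -> (t x = (a / 2)%:E <-> x = 0)) \/
   (forall x, Ext0 x -> (s x = 0 <-> (x <= a%:E)%E))) ->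
  exists (F : R -> R) (Tsuper : R -> R -> R),
    pseudo_automorphism F /\ t_superconorm Tsuper /\
    forall x y, I01 x -> I01 y -> s (t x + t y)%E = F (Tsuper x y).
Proof.
move=> _ t_ge0 s01 t_cont _ t_mono s_mono G_grouping _.
have t0_fin := grouping_t0_fin t_ge0 t_mono G_grouping.
exists (fun x => s (t x + t 0%R)%E), (tsuper t); split.
  exact: grouping_section0 G_grouping.
split; first exact: tsuper_t_superconorm.
have Ext0D u v : I01 u -> I01 v -> Ext0 (t u + t v)%E.
  by move=> u01 v01; apply: adde_ge0; apply: t_ge0.
have G10 : s (t 1%R + t 0%R)%E = 1.
  by case: G_grouping => _ [_ _ G1 _ _]; apply/G1; [exact: I01_1 | exact: I01_0 | left].
move=> x y x01 y01; rewrite /= t_tsuperD_t0 //.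
apply/esym/monotone_mine_saturated => //.
- exact: Ext0D.
- exact: Ext0D I01_1 I01_0.
- by case/I01P/andP: (s01 _ (Ext0D _ _ x01 y01)).
Qed.
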